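(* Let $\Omega=(0,L)^2$ with periodic boundary conditions, $M$ a positive integer, $h=L/M$, $\mathbb{V}_h\cong\mathbb{R}^{M^2}$ the grid functions on the periodic grid $\{(ih,jh):1\le i,j\le M\}$ with maximum norm $\|v\|_\infty=\max|v_{i,j}|$, $\Lambda_h$ the standard five-point central-difference matrix of the Laplacian with periodic boundary conditions, and $\varepsilon>0$. Let $0=t_0<\dots<t_N=T$, $\tau_k=t_k-t_{k-1}$, $r_k=\tau_k/\tau_{k-1}$ for $2\le k\le N$, $r_1:=0$. Let $u^n\in\mathbb{V}_h$ solve $$D_2u^n=\varepsilon^2\Lambda_hu^n-f(u^n),\qquad 1\le n\le N,$$ where $f(u)=u^3-u$ componentwise, $D_2u^1=(u^1-u^0)/\tau_1$ and for $n\ge2$ $D_2u^n=\frac{1+2r_n}{\tau_n(1+r_n)}(u^n-u^{n-1})-\frac{r_n^2}{\tau_n(1+r_n)}(u^{n-1}-u^{n-2})$. Let $r_s\in[1,1+\sqrt2)$ satisfy $0<r_k\le r_s$ for all $2\le k\le N$ (in particular $0<r_k<1+\sqrt2$), set $\eta=\frac{2r_s^2}{(1+r_s)^2}$, and assume $$\tau_n\le\frac{(1+2r_n)\eta-r_n^2}{\eta^2(1+r_n)}\cdot\frac{1-\eta}{2+4\varepsilon^2h^{-2}}\quad\text{for } n\ge1.$$ If $\|u^0\|_\infty\le1$, then $\|u^k\|_\infty\le1$ for $1\le k\le N$. *)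

From mathcomp Require Import all_boot all_order all_algebra.
Set Implicit Arguments. Unset Strict Implicit. Unset Printing Implicit Defensive.
Import Order.TTheory GRing.Theory Num.Theory.
Local Open Scope ring_scope.

(* Grid functions on the periodic M x M grid: V_h ~ R^(M^2);
   index i : 'I_M stands for the grid point number i+1 (i.e. (i+1)h). *)
Definition grid (R : rcfType) (M : nat) := 'I_M -> 'I_M -> R.

Definition normInf (R : rcfType) (M : nat) (v : grid R M) : R :=
  \big[Num.max/0]_(i < M) \big[Num.max/0]_(j < M) `|v i j|.

Definition lap (R : rcfType) (M : nat) (h : R) (v : grid R M) : grid R M :=
  fun i j => (v (ordS i) j + v (ord_pred i) j + v i (ordS j) + v i (ord_pred j)
              - 4 * v i j) / h ^+ 2.

Definition fCH (R : rcfType) (x : R) : R := x ^+ 3 - x.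

Definition tau (R : rcfType) (t : nat -> R) (k : nat) : R := t k - t k.-1.
Definition stepratio (R : rcfType) (t : nat -> R) (k : nat) : R :=
  if (2 <= k)%N then tau t k / tau t k.-1 else 0.

Definition D2 (R : rcfType) (M : nat) (t : nat -> R) (u : nat -> grid R M)
    (n : nat) : grid R M :=
  fun i j =>
    if n == 1%N then (u 1%N i j - u 0%N i j) / tau t 1
    else let rn := stepratio t n in
         (1 + 2 * rn) / (tau t n * (1 + rn)) * (u n i j - u n.-1 i j)
         - rn ^+ 2 / (tau t n * (1 + rn)) * (u n.-1 i j - u n.-2 i j).

(* The scheme preserves |u^m| <= 1 together with |u^m - eta u^(m-1)| <= 1 - eta.
   Write the step as A u^n - (eps^2 Lambda_h u^n - f(u^n)) = (A + B) u^(n-1) - B u^(n-2).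
   Since B <= A eta, the right-hand side is a nonnegative combination of u^(n-1) and
   u^(n-1) - eta u^(n-2), hence bounded by A, and the discrete maximum principle (at a
   maximum of |u^n| the Laplacian has the opposite sign) gives |u^n| <= 1.  Moreover
   eta (1 + s A) (u^n - eta u^(n-1)) = eta E + s B (u^(n-1) - eta u^(n-2)), where
   s (1 - eta) (A eta - B) = eta^2 and E = u^n + s (eps^2 Lambda_h u^n - f(u^n)) is an
   explicit Euler step; the time-step restriction says exactly s (2 + 4 eps^2/h^2) <= 1,
   which keeps E in [-1, 1]. *)

From mathcomp Require Import all_boot all_order all_algebra.
From mathcomp Require Import ring lra.
Set Implicit Arguments. Unset Strict Implicit. Unset Printing Implicit Defensive.
Import Order.TTheory GRing.Theory Num.Theory.
Local Open Scope ring_scope.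

Lemma normInf_le1P (R : rcfType) (M : nat) (v : grid R M) :
  normInf v <= 1 <-> (forall i j, `|v i j| <= 1).
Proof.
split=> [vle1 i j | le1].
  apply: le_trans vle1; apply: le_trans (le_bigmax _ _ i).
  exact: (le_bigmax _ (fun j => `|v i j|) j).
by apply: bigmax_le => // i _; apply: bigmax_le.
Qed.

Lemma ler_norm_comb (R : numDomainType) (a b x y p q : R) :
  0 <= a -> 0 <= b -> `|x| <= p -> `|y| <= q -> `|a * x + b * y| <= a * p + b * q.
Proof.
move=> a_ge0 b_ge0 xp yq; apply: le_trans (ler_normD _ _) _.
by rewrite !normrM (ger0_norm a_ge0) (ger0_norm b_ge0) lerD // ler_wpM2l.
Qed.

Lemma ler_norm_pmul2l (R : numDomainType) (c x d : R) :
  0 < c -> `|c * x| <= c * d -> `|x| <= d.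
Proof. by move=> c_gt0; rewrite normrM (gtr0_norm c_gt0) ler_pM2l. Qed.

Lemma mulr_le_sqr (R : realDomainType) (m n : R) : `|n| <= `|m| -> m * n <= m ^+ 2.
Proof.
move=> nm; apply: le_trans (ler_norm _) _.
by rewrite normrM -real_normK ?num_real // expr2 ler_wpM2l.
Qed.

Lemma reaction_norm_le1 (R : rcfType) (A y : R) :
  0 < A -> A * y ^+ 2 + y * fCH y <= `|y| * A -> `|y| <= 1.
Proof.
move=> A_gt0; have -> : y * fCH y = (y ^+ 2) ^+ 2 - y ^+ 2 by rewrite /fCH; ring.
rewrite -[y ^+ 2]real_normK ?num_real // => ineq.
rewrite leNgt; apply/negP => y_gt1; have y_gt0 := lt_trans ltr01 y_gt1.
have : 0 < A * (`|y| * (`|y| - 1)) by rewrite !mulr_gt0 ?subr_gt0.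
have : 0 < `|y| ^+ 2 * (`|y| ^+ 2 - 1) by rewrite mulr_gt0 ?subr_gt0 ?exprn_gt0 ?expr_gt1.
nra.
Qed.

Lemma cubic_step_norm_le (R : realDomainType) (a s x : R) :
  0 <= s -> 2 * s <= a -> `|x| <= 1 -> `|x * (a + s * (1 - x ^+ 2))| <= a.
Proof.
move=> s_ge0 sa; rewrite ler_norml => /andP[x_ge x_le].
(* a - x (a + s (1 - x^2)) = (1 - x) (a - 2 s) + s (1 - x)^2 (2 + x), and symmetrically. *)
have : 0 <= (1 + x) * (a - 2 * s) by apply: mulr_ge0; lra.
have : 0 <= (1 - x) * (a - 2 * s) by apply: mulr_ge0; lra.
have : 0 <= s * ((1 + x) ^+ 2 * (2 - x)) by rewrite !mulr_ge0 ?sqr_ge0 //; lra.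
have : 0 <= s * ((1 - x) ^+ 2 * (2 + x)) by rewrite !mulr_ge0 ?sqr_ge0 //; lra.
move=> *; rewrite ler_norml; apply/andP; split; nra.
Qed.

Lemma mul_lap_argmax_le0 (R : rcfType) (M : nat) (h : R) (X : grid R M) i0 j0 :
  (forall i j, `|X i j| <= `|X i0 j0|) -> X i0 j0 * lap h X i0 j0 <= 0.
Proof.
move=> Xmax; rewrite /lap mulrA mulr_le0_ge0 ?invr_ge0 ?sqr_ge0 //.
have := mulr_le_sqr (Xmax (ordS i0) j0); have := mulr_le_sqr (Xmax (ord_pred i0) j0).
have := mulr_le_sqr (Xmax i0 (ordS j0)); have := mulr_le_sqr (Xmax i0 (ord_pred j0)).
move=> *; nra.
Qed.

Lemma implicit_step_norm_le1 (R : rcfType) (M : nat) (h e A : R) (X W : grid R M) :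
  0 < A -> (forall i j, `|W i j| <= A) ->
  (forall i j, A * X i j - (e ^+ 2 * lap h X i j - fCH (X i j)) = W i j) ->
  forall i j, `|X i j| <= 1.
Proof.
move=> A_gt0 W_le eqX; case: M X W W_le eqX => [|M] X W W_le eqX; first by case.
have [[i0 j0] _ Xmax] := @arg_maxP _ _ _ (ord0, ord0) predT (fun p => `|X p.1 p.2|) isT.
suff X0_le1 : `|X i0 j0| <= 1 by move=> i j; apply: le_trans X0_le1; apply: (Xmax (i, j)).
apply: (reaction_norm_le1 A_gt0); set m := X i0 j0.
have lap_le0 : e ^+ 2 * (m * lap h X i0 j0) <= 0.
  by rewrite mulr_ge0_le0 ?sqr_ge0 // mul_lap_argmax_le0 // => i j; apply: (Xmax (i, j)).
have mW : m * W i0 j0 <= `|m| * A.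
  by apply: le_trans (ler_norm _) _; rewrite normrM ler_wpM2l.
rewrite -(eqX i0 j0) -/m in mW; nra.
Qed.

Lemma explicit_step_norm_le1 (R : rcfType) (M : nat) (h e s : R) (X : grid R M) :
  (forall i j, `|X i j| <= 1) -> 0 <= s -> s * (2 + 4 * (e ^+ 2 / h ^+ 2)) <= 1 ->
  forall i j, `|X i j + s * (e ^+ 2 * lap h X i j - fCH (X i j))| <= 1.
Proof.
move=> X_le1 s_ge0 s_small i j; set c := e ^+ 2 / h ^+ 2 in s_small *.
have c_ge0 : 0 <= c by rewrite divr_ge0 ?sqr_ge0.
set S := X (ordS i) j + X (ord_pred i) j + X i (ordS j) + X i (ord_pred j).
have S_le4 : `|S| <= 4.
  move: (X_le1 (ordS i) j) (X_le1 (ord_pred i) j) (X_le1 i (ordS j)) (X_le1 i (ord_pred j)).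
  rewrite /S !ler_norml => /andP[? ?] /andP[? ?] /andP[? ?] /andP[? ?]; apply/andP; split; lra.
have -> : X i j + s * (e ^+ 2 * lap h X i j - fCH (X i j))
    = X i j * ((1 - 4 * (s * c)) + s * (1 - X i j ^+ 2)) + (s * c) * S.
  by rewrite /lap /fCH /c /S; ring.
have sc_ge0 : 0 <= s * c by rewrite mulr_ge0.
have two_s : 2 * s <= 1 - 4 * (s * c).
  by rewrite lerBrDr; move: s_small; rewrite mulrDr mulrCA [s * 2]mulrC.
have scS_le : `|s * c * S| <= s * c * 4 by rewrite normrM ger0_norm // ler_wpM2l.
have x_step := cubic_step_norm_le s_ge0 two_s (X_le1 i j).
apply: le_trans (ler_normD _ _) _; lra.
Qed.

Definition bdf2_lead (R : fieldType) (tau r : R) := (1 + 2 * r) / (tau * (1 + r)).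
Definition bdf2_lag (R : fieldType) (tau r : R) := r ^+ 2 / (tau * (1 + r)).

(* [stepratio t 1 = 0], so the backward Euler first step is the case n = 1. *)
Lemma D2E (R : rcfType) (M : nat) (t : nat -> R) (u : nat -> grid R M) n i j :
  (0 < n)%N ->
  D2 t u n i j = bdf2_lead (tau t n) (stepratio t n) * (u n i j - u n.-1 i j)
               - bdf2_lag (tau t n) (stepratio t n) * (u n.-1 i j - u n.-2 i j).
Proof.
rewrite /D2 /bdf2_lead /bdf2_lag; have [-> _ | //] := eqVneq n 1%N.
have -> : stepratio t 1 = 0 by [].
by rewrite expr2 !(mul0r, mulr0, addr0, subr0, mulr1, mul1r) mulrC.
Qed.

Lemma bdf2_tau_condition_coef (R : realFieldType) (tau r eta c : R) :
  0 < tau -> 0 <= r -> 0 < eta -> eta < 1 -> 0 <= c ->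
  tau <= ((1 + 2 * r) * eta - r ^+ 2) / (eta ^+ 2 * (1 + r)) * ((1 - eta) / (2 + 4 * c)) ->
  eta ^+ 2 * (2 + 4 * c) <= (1 - eta) * (bdf2_lead tau r * eta - bdf2_lag tau r).
Proof.
move=> tau_gt0 r_ge0 eta_gt0 eta_lt1 c_ge0.
have D_gt0 : 0 < eta ^+ 2 * (2 + 4 * c) by rewrite mulr_gt0 ?exprn_gt0 //; lra.
have -> : ((1 + 2 * r) * eta - r ^+ 2) / (eta ^+ 2 * (1 + r)) * ((1 - eta) / (2 + 4 * c))
    = tau * ((1 - eta) * (bdf2_lead tau r * eta - bdf2_lag tau r) / (eta ^+ 2 * (2 + 4 * c))).
  by rewrite /bdf2_lead /bdf2_lag; field; rewrite !gt_eqF //; lra.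
by rewrite -{1}(mulr1 tau) ler_pM2l // ler_pdivlMr // mul1r.
Qed.

Lemma bdf2_explicit_weight (R : realFieldType) (A B eta c : R) :
  0 < eta -> eta < 1 -> 0 <= c ->
  eta ^+ 2 * (2 + 4 * c) <= (1 - eta) * (A * eta - B) ->
  B <= A * eta /\ exists s,
    [/\ 0 <= s, s * (1 - eta) * (A * eta - B) = eta ^+ 2 & s * (2 + 4 * c) <= 1].
Proof.
move=> eta_gt0 eta_lt1 c_ge0 cond.
have K_gt0 : 0 < (1 - eta) * (A * eta - B).
  by apply: lt_le_trans cond; rewrite mulr_gt0 ?exprn_gt0 //; lra.
split; first by move: K_gt0; rewrite pmulr_rgt0 ?subr_gt0 // => /ltW.
exists (eta ^+ 2 / ((1 - eta) * (A * eta - B))); split.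
- by rewrite divr_ge0 ?sqr_ge0 ?ltW.
- by rewrite -mulrA divfK ?gt_eqF.
- by rewrite mulrAC ler_pdivrMr // mul1r.
Qed.

Lemma bdf2_rhs_norm_le (R : realFieldType) (A B eta P Q : R) :
  0 <= B -> 0 < eta -> B <= A * eta -> `|P| <= 1 -> `|P - eta * Q| <= 1 - eta ->
  `|(A + B) * P - B * Q| <= A.
Proof.
move=> B_ge0 eta_gt0 B_le P_le1 PQ_le; apply: (ler_norm_pmul2l eta_gt0).
have -> : eta * ((A + B) * P - B * Q) = (A * eta + B * eta - B) * P + B * (P - eta * Q).
  by ring.
apply: le_trans (ler_norm_comb _ B_ge0 P_le1 PQ_le) _; first by nra.
by rewrite mulr1 mulrBr mulr1 addrA subrK addrK mulrC.
Qed.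

Lemma bdf2_weighted_diff_norm_le (R : realFieldType) (A B eta s X P Q : R) :
  0 <= A -> 0 <= B -> 0 < eta -> 0 <= s -> s * (1 - eta) * (A * eta - B) = eta ^+ 2 ->
  `|X + s * (A * (X - P) - B * (P - Q))| <= 1 -> `|P - eta * Q| <= 1 - eta ->
  `|X - eta * P| <= 1 - eta.
Proof.
move=> A_ge0 B_ge0 eta_gt0 s_ge0 s_def X_le PQ_le.
have c_gt0 : 0 < eta * (1 + s * A) by rewrite mulr_gt0 // ltr_pwDl ?mulr_ge0.
apply: (ler_norm_pmul2l c_gt0).
have -> : eta * (1 + s * A) * (X - eta * P)
    = eta * (X + s * (A * (X - P) - B * (P - Q))) + s * B * (P - eta * Q)
      + P * (s * (1 - eta) * (A * eta - B) - eta ^+ 2) by ring.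
rewrite s_def subrr mulr0 addr0.
apply: le_trans (ler_norm_comb (ltW eta_gt0) (mulr_ge0 s_ge0 B_ge0) X_le PQ_le) _.
have -> : eta * (1 + s * A) * (1 - eta)
    = eta * 1 + s * B * (1 - eta) + (s * (1 - eta) * (A * eta - B) - eta ^+ 2) by ring.
by rewrite s_def subrr addr0.
Qed.

Lemma bdf2_eta_gt0_lt1 (R : rcfType) (rs : R) :
  0 < rs -> rs < 1 + Num.sqrt 2 -> 0 < 2 * rs ^+ 2 / (1 + rs) ^+ 2 < 1.
Proof.
move=> rs_gt0 rs_lt; have rs1_gt0 : 0 < (1 + rs) ^+ 2 by rewrite exprn_gt0 // addr_gt0.
apply/andP; split; first by rewrite divr_gt0 // mulr_gt0 // exprn_gt0.
rewrite ltr_pdivrMr // mul1r.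
have sqrt2_ge1 : 1 <= Num.sqrt 2 :> R by rewrite -[leLHS]sqrtr1 ler_sqrt ?ler1n.
have : 0 < (Num.sqrt 2 - (rs - 1)) * (Num.sqrt 2 + (rs - 1)) by rewrite mulr_gt0 //; lra.
rewrite -subr_sqr sqr_sqrtr ?ler0n //; nra.
Qed.

Section Bdf2MaximumPrinciple.

Variables (R : rcfType) (M : nat) (h eps eta : R) (N : nat).
Variables (t : nat -> R) (u : nat -> grid R M).
Hypotheses (eta_gt0 : 0 < eta) (eta_lt1 : eta < 1).
Hypothesis tau_gt0 : forall n, (1 <= n <= N)%N -> 0 < tau t n.
Hypothesis stepratio_ge0 : forall n, (1 <= n <= N)%N -> 0 <= stepratio t n.
Hypothesis tau_le : forall n, (1 <= n <= N)%N ->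
  tau t n <= ((1 + 2 * stepratio t n) * eta - stepratio t n ^+ 2)
               / (eta ^+ 2 * (1 + stepratio t n))
             * ((1 - eta) / (2 + 4 * eps ^+ 2 / h ^+ 2)).
Hypothesis scheme : forall n, (1 <= n <= N)%N -> forall i j,
  D2 t u n i j = eps ^+ 2 * lap h (u n) i j - fCH (u n i j).
Hypothesis u0_le1 : forall i j, `|u 0%N i j| <= 1.

(* At m = 0, m.-1 = 0 and the second condition reads (1 - eta) |u^0| <= 1 - eta. *)
Definition bdf2_bounded m :=
  (forall i j, `|u m i j| <= 1) /\ (forall i j, `|u m i j - eta * u m.-1 i j| <= 1 - eta).

Lemma bdf2_bounded0 : bdf2_bounded 0.
Proof.
have eta_le1 := ltW eta_lt1.
split=> // i j; rewrite -{1}[u 0%N i j]mul1r -mulrBl normrM ger0_norm ?subr_ge0 //.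
by rewrite ler_piMr ?subr_ge0.
Qed.

Lemma bdf2_boundedS m : (m < N)%N -> bdf2_bounded m -> bdf2_bounded m.+1.
Proof.
move=> mN [u_le1 du_le]; have n_range : (1 <= m.+1 <= N)%N by rewrite mN.
have r_ge0 := stepratio_ge0 n_range.
set A := bdf2_lead (tau t m.+1) (stepratio t m.+1).
set B := bdf2_lag (tau t m.+1) (stepratio t m.+1).
have A_gt0 : 0 < A by rewrite divr_gt0 ?mulr_gt0 ?tau_gt0 //; lra.
have B_ge0 : 0 <= B by rewrite divr_ge0 ?sqr_ge0 // mulr_ge0 ?ltW ?tau_gt0 //; lra.
set c := eps ^+ 2 / h ^+ 2.
have c_ge0 : 0 <= c by rewrite divr_ge0 ?sqr_ge0.
have tau_small := tau_le n_range; rewrite -[4 * _ / _]mulrA -/c in tau_small.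
have [B_le [s [s_ge0 s_def s_small]]] := bdf2_explicit_weight eta_gt0 eta_lt1 c_ge0
  (bdf2_tau_condition_coef (tau_gt0 n_range) r_ge0 eta_gt0 eta_lt1 c_ge0 tau_small).
have step i j : A * (u m.+1 i j - u m i j) - B * (u m i j - u m.-1 i j)
    = eps ^+ 2 * lap h (u m.+1) i j - fCH (u m.+1 i j).
  by rewrite -scheme // D2E.
have un_le1 : forall i j, `|u m.+1 i j| <= 1.
  pose W i j := (A + B) * u m i j - B * u m.-1 i j.
  apply: (implicit_step_norm_le1 (h := h) (e := eps) (W := W) A_gt0) => i j.
    exact: bdf2_rhs_norm_le B_ge0 eta_gt0 B_le (u_le1 i j) (du_le i j).
  by rewrite /W -step; ring.
split=> // i j /=.
apply: (bdf2_weighted_diff_norm_le (ltW A_gt0) B_ge0 eta_gt0 s_ge0 s_def _ (du_le i j)).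
by rewrite step; apply: explicit_step_norm_le1.
Qed.

Lemma bdf2_bounded_le m : (m <= N)%N -> bdf2_bounded m.
Proof.
elim: m => [_ | m IHm mN]; first exact: bdf2_bounded0.
exact: bdf2_boundedS mN (IHm (ltnW mN)).
Qed.

End Bdf2MaximumPrinciple.

Unset Implicit Arguments.

Theorem theorem4p1 (R : rcfType) (L : R) (M : nat) (eps T : R) (N : nat)
    (t : nat -> R) (u : nat -> grid R M) (rs : R) :
  0 < L -> (0 < M)%N -> 0 < eps ->
  t 0%N = 0 -> (forall k, (1 <= k <= N)%N -> t k.-1 < t k) -> t N = T ->
  (forall n, (1 <= n <= N)%N -> forall i j,
      D2 t u n i j = eps ^+ 2 * lap (L / M%:R) (u n) i j - fCH (u n i j)) ->
  1 <= rs -> rs < 1 + Num.sqrt 2 ->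
  (forall k, (2 <= k <= N)%N -> 0 < stepratio t k <= rs) ->
  (let eta := 2 * rs ^+ 2 / (1 + rs) ^+ 2 in
   forall n, (1 <= n <= N)%N ->
     tau t n <= ((1 + 2 * stepratio t n) * eta - stepratio t n ^+ 2)
                  / (eta ^+ 2 * (1 + stepratio t n))
                * ((1 - eta) / (2 + 4 * eps ^+ 2 / (L / M%:R) ^+ 2))) ->
  normInf (u 0%N) <= 1 ->
  forall k, (1 <= k <= N)%N -> normInf (u k) <= 1.
Proof.
move=> _ _ _ _ t_incr _ scheme rs_ge1 rs_lt ratio_le tau_le /normInf_le1P u0_le1 k /andP[_ kN].
have /andP[eta_gt0 eta_lt1] := bdf2_eta_gt0_lt1 (lt_le_trans ltr01 rs_ge1) rs_lt.
have tau_gt0 n : (1 <= n <= N)%N -> 0 < tau t n by move/t_incr; rewrite subr_gt0.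
have ratio_ge0 n : (1 <= n <= N)%N -> 0 <= stepratio t n.
  case/andP=> _ nN; have [n_ge2 | n_lt2] := leqP 2 n; last by rewrite /stepratio leqNgt n_lt2.
  have /ratio_le/andP[ratio_gt0 _] : (2 <= n <= N)%N by rewrite n_ge2.
  exact: ltW.
apply/normInf_le1P.
exact: (bdf2_bounded_le eta_gt0 eta_lt1 tau_gt0 ratio_ge0 tau_le scheme u0_le1 kN).1.
Qed.
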